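(* Let $D=(V,A)$ be a Steiner rooted $k$-arc-connected directed graph with root $r\in V$ and terminal set $S\subseteq V\setminus\{r\}$. (a) Let $s\in S$ and let $\mathcal{U}$ be a nonempty family of tight $s$-cuts. Then both $\bigcap_{U\in\mathcal{U}}U$ and $\bigcup_{U\in\mathcal{U}}U$ are tight $s$-cuts. (b) Let $S'\subseteq S$ be nonempty and, for each $s\in S'$, let $U_s$ be a tight $s$-cut. Suppose there is $s_0\in S'$ such that the number of arcs leaving $U_s\cup U_{s_0}$ is at least $k$ for all $s\in S'\setminus\{s_0\}$. Then $\bigcap_{s\in S'}U_s$ is a tight $s$-cut for every $s\in S'$.
   Context: $D$ is Steiner rooted $k$-arc-connected if for every $s\in S$ there are $k$ pairwise arc-disjoint directed $r$-$s$ paths. For $s\in S$, $U\subseteq V$ is an $s$-cut if $r\in U$ and $s\notin U$, and a tight $s$-cut if moreover exactly $k$ arcs of $D$ leave $U$. *)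

From mathcomp Require Import all_boot.
Set Implicit Arguments. Unset Strict Implicit. Unset Printing Implicit Defensive.

(* A directed (multi)graph D = (V, A): finite vertex type V, finite arc type A,
   each arc a goes from [tl a] to [hd a]. Parallel arcs are allowed. *)

Section Digraph.
Variables (V A : finType) (tl hd : A -> V).

Fixpoint is_walk (u v : V) (p : seq A) : bool :=
  match p with
  | [::] => u == v
  | a :: q => (tl a == u) && is_walk (hd a) v q
  end.

Definition is_dpath (u v : V) (p : seq A) : bool :=
  is_walk u v p && uniq (u :: map hd p).

Definition steiner_rooted_k_arc_connected (k : nat) (r : V) (S : {set V}) : Prop :=
  forall s, s \in S ->
    exists P : 'I_k -> seq A,
      (forall i, is_dpath r s (P i)) /\
      (forall i j, i != j -> forall a, a \in P i -> a \notin P j).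

Definition dout (U : {set V}) : nat :=
  #|[set a : A | (tl a \in U) && (hd a \notin U)]|.

Definition s_cut (r s : V) (U : {set V}) : bool := (r \in U) && (s \notin U).

Definition tight_s_cut (k : nat) (r s : V) (U : {set V}) : bool :=
  s_cut r s U && (dout U == k).

End Digraph.

(* Every s-cut has out-degree at least k, since each of the k arc-disjoint
   r-s paths must leave it through its own arc.  Out-degree is submodular,
   dout (X ∩ Y) + dout (X ∪ Y) <= dout X + dout Y, so for two tight s-cuts
   X and Y the s-cuts X ∩ Y and X ∪ Y, both of out-degree at least k, must
   have out-degree exactly k; (a) follows by induction on the family.  For (b),
   U_s ∩ U_{s0} is an s0-cut and dout (U_s ∪ U_{s0}) >= k, so the same
   inequality makes every U_s ∩ U_{s0} a tight s0-cut; their intersection is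
   the intersection W of all U_s, which is then tight and, being contained in
   every U_s, avoids every s in S'. *)
From mathcomp Require Import all_boot zify.
Set Implicit Arguments. Unset Strict Implicit. Unset Printing Implicit Defensive.

Lemma big_closed_nonempty (R : Type) (idx : R) (op : Monoid.com_law idx)
    (I : finType) (P : {pred I}) (F : I -> R) (Q : R -> Prop) (i0 : I) :
  (forall x y, Q x -> Q y -> Q (op x y)) -> P i0 -> (forall i, P i -> Q (F i)) ->
  Q (\big[op/idx]_(i | P i) F i).
Proof.
move=> Qop Pi0 QF; rewrite (bigD1 i0) //=.
elim/big_rec: _ => [|i x /andP [Pi _] Qx]; first by rewrite Monoid.mulm1; apply: QF.
by rewrite Monoid.mulmCA; apply: Qop => //; apply: QF.
Qed.

Lemma disjoint_hitting_card (T : finType) (B : {set T}) (k : nat) (P : 'I_k -> seq T) :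
  (forall i j, i != j -> forall x, x \in P i -> x \notin P j) ->
  (forall i, exists2 x, x \in P i & x \in B) -> k <= #|B|.
Proof.
move=> disjP hitP.
have hit i : exists x, (x \in P i) && (x \in B).
  by have [x xP xB] := hitP i; exists x; rewrite xP xB.
pose g i := xchoose (hit i).
have gP i : (g i \in P i) && (g i \in B) := xchooseP (hit i).
have g_inj : injective g.
  move=> i j gij; case: (eqVneq i j) => // /disjP/(_ (g i) (andP (gP i)).1).
  by rewrite gij (andP (gP j)).1.
have <- : #|g @: [set: 'I_k]| = k by rewrite card_imset // cardsT card_ord.
by apply/subset_leq_card/subsetP => _ /imsetP [i _ ->]; case/andP: (gP i).
Qed.

Section Digraph.
Variables (V A : finType) (tl hd : A -> V).

Definition arcs_out (U : {set V}) : {set A} := [set a | (tl a \in U) && (hd a \notin U)].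

Lemma doutE (U : {set V}) : dout tl hd U = #|arcs_out U|.
Proof. by []. Qed.

Lemma dout_sum (U : {set V}) :
  dout tl hd U = \sum_a ((tl a \in U) && (hd a \notin U) : nat).
Proof.
rewrite /dout -sum1_card big_mkcond /=; apply: eq_bigr => a _.
by rewrite inE; case: (_ && _).
Qed.

Lemma dout_submod (X Y : {set V}) :
  dout tl hd (X :&: Y) + dout tl hd (X :|: Y) <= dout tl hd X + dout tl hd Y.
Proof.
rewrite !dout_sum -!big_split /=; apply: leq_sum => a _.
by rewrite !inE; case: (tl a \in X); case: (tl a \in Y); case: (hd a \in X); case: (hd a \in Y).
Qed.

Lemma walk_exits (U : {set V}) (p : seq A) (u v : V) :
  is_walk tl hd u v p -> u \in U -> v \notin U -> exists2 a, a \in p & a \in arcs_out U.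
Proof.
elim: p u => [|a p IHp] u /=; first by move=> /eqP -> ->.
move=> /andP [/eqP tl_a walk_p] uU vU; case hdU: (hd a \in U).
  by have [b bp bU] := IHp _ walk_p hdU vU; exists b; rewrite // inE bp orbT.
by exists a; rewrite ?inE ?eqxx // tl_a uU hdU.
Qed.

Lemma tight_uncross (k : nat) (X Y : {set V}) :
  dout tl hd X = k -> dout tl hd Y = k ->
  k <= dout tl hd (X :&: Y) -> k <= dout tl hd (X :|: Y) ->
  dout tl hd (X :&: Y) = k /\ dout tl hd (X :|: Y) = k.
Proof. by have := dout_submod X Y; lia. Qed.

Variables (k : nat) (r : V) (S : {set V}).
Hypothesis connS : steiner_rooted_k_arc_connected tl hd k r S.

Lemma s_cut_dout_ge (s : V) (U : {set V}) : s \in S -> s_cut r s U -> k <= dout tl hd U.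
Proof.
move=> sS /andP [rU sU]; have [P [pathP disjP]] := connS sS.
rewrite doutE; apply: (disjoint_hitting_card disjP) => i.
by have /andP [walkP _] := pathP i; apply: walk_exits walkP rU sU.
Qed.

Lemma tight_s_cutI_of_setU (s : V) (X Y : {set V}) :
  s \in S -> r \in X -> dout tl hd X = k -> tight_s_cut tl hd k r s Y ->
  k <= dout tl hd (X :|: Y) -> tight_s_cut tl hd k r s (X :&: Y).
Proof.
move=> sS rX doutX /andP [/andP [rY sY] /eqP doutY] doutXUY_ge.
have cutXY : s_cut r s (X :&: Y) by rewrite /s_cut !inE rX rY (negbTE sY) andbF.
have [doutXY _] := tight_uncross doutX doutY (s_cut_dout_ge sS cutXY) doutXUY_ge.
by rewrite /tight_s_cut cutXY doutXY eqxx.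
Qed.

Lemma tight_s_cutIU (s : V) (X Y : {set V}) :
  s \in S -> tight_s_cut tl hd k r s X -> tight_s_cut tl hd k r s Y ->
  tight_s_cut tl hd k r s (X :&: Y) /\ tight_s_cut tl hd k r s (X :|: Y).
Proof.
move=> sS /andP [/andP [rX sX] /eqP doutX] /andP [/andP [rY sY] /eqP doutY].
have cutXY : s_cut r s (X :&: Y) by rewrite /s_cut !inE rX rY (negbTE sY) andbF.
have cutXUY : s_cut r s (X :|: Y) by rewrite /s_cut !inE rX (negbTE sX) (negbTE sY).
have [doutXY doutXUY] :=
  tight_uncross doutX doutY (s_cut_dout_ge sS cutXY) (s_cut_dout_ge sS cutXUY).
by rewrite /tight_s_cut cutXY cutXUY doutXY doutXUY eqxx.
Qed.

Lemma tight_s_cut_bigcap_bigcup (s : V) (I : finType) (P : {pred I}) (F : I -> {set V})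
    (i0 : I) :
  s \in S -> P i0 -> (forall i, P i -> tight_s_cut tl hd k r s (F i)) ->
  tight_s_cut tl hd k r s (\bigcap_(i | P i) F i) /\
  tight_s_cut tl hd k r s (\bigcup_(i | P i) F i).
Proof.
move=> sS Pi0 tightF.
split; apply: (big_closed_nonempty (Q := tight_s_cut tl hd k r s) _ Pi0 tightF) => X Y tightX tightY.
- exact: (tight_s_cutIU sS tightX tightY).1.
- exact: (tight_s_cutIU sS tightX tightY).2.
Qed.

Lemma tight_s_cut_bigcap_anchored (S' : {set V}) (U : V -> {set V}) (s0 : V) :
  S' \subset S -> s0 \in S' ->
  (forall s, s \in S' -> tight_s_cut tl hd k r s (U s)) ->
  (forall s, s \in S' :\ s0 -> k <= dout tl hd (U s :|: U s0)) ->
  forall s, s \in S' -> tight_s_cut tl hd k r s (\bigcap_(t in S') U t).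
Proof.
move=> subS' s0S' tightU doutU_ge s sS'.
have s0S : s0 \in S := subsetP subS' _ s0S'.
have tightU0 := tightU _ s0S'.
pose W := \bigcap_(t in S') U t.
have tightW0 : tight_s_cut tl hd k r s0 (W :&: U s0).
  apply: (big_closed_nonempty (Q := fun X => tight_s_cut tl hd k r s0 (X :&: U s0)) _ s0S').
    move=> X Y tightX tightY; have [tightXY _] := tight_s_cutIU s0S tightX tightY.
    by rewrite setIACA setIid in tightXY.
  move=> t tS'; case: (eqVneq t s0) => [-> | t_neq]; first by rewrite setIid.
  have /andP [/andP [rUt _] /eqP doutUt] := tightU _ tS'.
  apply: tight_s_cutI_of_setU s0S rUt doutUt tightU0 _.
  by apply: doutU_ge; rewrite !inE t_neq.
move: tightW0; rewrite (setIidPl (bigcap_inf _ s0S')) => /andP [/andP [rW _] doutW].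
have /andP [/andP [_ sU] _] := tightU _ sS'.
rewrite /tight_s_cut /s_cut rW doutW andbT.
by apply: contra sU => /bigcapP; apply.
Qed.

End Digraph.

Theorem lemma2p9 (V A : finType) (tl hd : A -> V) (k : nat) (r : V) (S : {set V}) :
  r \notin S ->
  steiner_rooted_k_arc_connected tl hd k r S ->
  (* (a) *)
  (forall (s : V) (F : {set {set V}}),
      s \in S -> F != set0 ->
      (forall U, U \in F -> tight_s_cut tl hd k r s U) ->
      tight_s_cut tl hd k r s (\bigcap_(U in F) U) /\
      tight_s_cut tl hd k r s (\bigcup_(U in F) U)) /\
  (* (b) *)
  (forall (S' : {set V}) (U : V -> {set V}) (s0 : V),
      S' \subset S -> s0 \in S' ->
      (forall s, s \in S' -> tight_s_cut tl hd k r s (U s)) ->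
      (forall s, s \in S' :\ s0 -> k <= dout tl hd (U s :|: U s0)) ->
      forall s, s \in S' -> tight_s_cut tl hd k r s (\bigcap_(t in S') U t)).
Proof.
move=> _ connS; split; last exact: tight_s_cut_bigcap_anchored.
move=> s F sS /set0Pn [U0 U0F].
exact: (tight_s_cut_bigcap_bigcup (F := id) connS sS U0F).
Qed.
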